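(* Let $k$ be a positive integer and $G_1,\dots,G_m$ finite subgraphs of $\mathsf{Path}_{\mathbb Z}$ with $G_1\cup\dots\cup G_m=\mathsf{Path}_k$ and $\vec\Delta(G_1,\dots,G_m)=1$. Then there exists a shift permutation $\sigma$ of $[m]$ such that \[\vec\lambda(G_{\sigma(1)},\dots,G_{\sigma(m)})\ge\frac{k}{8}-\frac{\max\{\lambda(G_1),\dots,\lambda(G_m)\}}{2}\] and \[\vec\Delta(G_{\tilde\sigma_j(1)},\dots,G_{\tilde\sigma_j(m)})\ge\frac{\vec\Delta(G_1,\dots,G_m)}{2}\quad\text{for all }j\in[m].\]
   Context: Graphs are finite simple graphs without isolated vertices; $\emptyset$ is the empty graph. $\mathsf{Path}_{\mathbb Z}$ has vertex set $\mathbb Z$ and edges $\{i-1,i\}$; $\mathsf{Path}_k$ has vertices $0,\dots,k$ and edges $\{i-1,i\}$, $1\le i\le k$. $\Delta(G)$ = number of connected components; $\lambda(G)$ = maximum number of edges in a component ($0$ for $\emptyset$); $G\ominus F$ = union of components of $G$ sharing no vertex with $F$. With $H_l=G_l\ominus(G_1\cup\dots\cup G_{l-1})$: $\vec\Delta(G_1,\dots,G_m)=\sum_l\Delta(H_l)$, $\vec\lambda(G_1,\dots,G_m)=\sum_l\lambda(H_l)$ (applied to reordered sequences accordingly). Shift permutation: a permutation $\sigma$ of $[m]$ with $\sigma(j)\ge j-1$ for all $j$. For $I\subseteq[m]$ with $m\in I$, $I=\{i_1<\dots<i_p\}$, $i_0:=0$, let $\sigma_I(j)=i_h$ if $j=i_{h-1}+1$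 for some $h$, and $\sigma_I(j)=j-1$ otherwise; every shift permutation is $\sigma_I$ for exactly one such $I$. For $\sigma=\sigma_I$ and $j\in[m]$, $\tilde\sigma_j:=\sigma_{\tilde I_j}$ with $\tilde I_j=I\cup[i_{h-1}]$ if $j=i_h\in I$ and $\tilde I_j=I\cup[j-1]$ if $j\notin I$. *)

From HB Require Import structures.
From mathcomp Require Import all_boot all_order all_algebra.
From mathcomp Require Import finmap.
Set Implicit Arguments. Unset Strict Implicit. Unset Printing Implicit Defensive.
Import Order.TTheory GRing.Theory Num.Theory.
Local Open Scope ring_scope.


(* A finite subgraph (without isolated vertices) of Path_Z is determined by
   its edge set; the edge {i-1,i} is labelled by the integer i.  The vertex
   set is the set of endpoints of the edges. *)
Definition pgraph := {fset int}.

Definition pvert (G : pgraph) (v : int) : bool := (v \in G) || (v + 1 \in G).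

Definition irange (a b : int) : seq int :=
  [seq a + (n%:Z) | n <- iota 0 (absz (b - a)).+1].

Definition is_comp (G : pgraph) (a b : int) : bool :=
  [&& a <= b, all (fun x => x \in G) (irange a b),
      a - 1 \notin G & b + 1 \notin G].

Definition epairs (G : pgraph) : seq (int * int) :=
  [seq (a, b) | a <- enum_fset G, b <- enum_fset G].

Definition comps (G : pgraph) : seq (int * int) :=
  [seq p <- epairs G | is_comp G p.1 p.2].

Definition comp_size (p : int * int) : nat := (absz (p.2 - p.1)).+1.

Definition Delta (G : pgraph) : nat := size (comps G).

Definition lambda (G : pgraph) : nat := \max_(p <- comps G) comp_size p.

Definition shares (F : pgraph) (a b : int) : bool :=
  has (fun v => pvert F v) (irange (a - 1) b).

Definition ominus (G F : pgraph) : pgraph :=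
  ([fset e in G | has (fun p => (p.1 <= e <= p.2) && ~~ shares F p.1 p.2)
                     (comps G)])%fset.

Definition gunion (s : seq pgraph) : pgraph := (\big[fsetU/fset0]_(G <- s) G)%fset.

(* H_l = G_l ominus (G_1 u ... u G_{l-1}), l = 1..m  (0-based in Coq) *)
Definition Hs (s : seq pgraph) : seq pgraph :=
  [seq ominus (nth fset0 s l) (gunion (take l s)) | l <- iota 0 (size s)].

Definition vecDelta (s : seq pgraph) : nat := \sum_(H <- Hs s) Delta H.
Definition vecLambda (s : seq pgraph) : nat := \sum_(H <- Hs s) lambda H.

Definition PathG (k : nat) : pgraph := [fset (i%:Z) | i in iota 1 k]%fset.

Definition irangeN (n : nat) : seq nat := iota 1 n.

(* reordering (G_{sigma(1)}, ..., G_{sigma(m)}) of s = (G_1,...,G_m), with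
   sigma acting on 1-based indices *)
Definition reorder (s : seq pgraph) (sigma : nat -> nat) : seq pgraph :=
  [seq nth fset0 s (sigma j).-1 | j <- irangeN (size s)].

Definition is_shift_perm (m : nat) (sigma : nat -> nat) : Prop :=
  [/\ {in irangeN m, forall j, sigma j \in irangeN m},
      {in irangeN m &, injective sigma} &
      {in irangeN m, forall j, (j.-1 <= sigma j)%N}].

Definition valid_I (m : nat) (I : seq nat) : Prop :=
  {subset I <= irangeN m} /\ m \in I.

(* sigma_I : with I = {i_1 < ... < i_p}, i_0 = 0,
   sigma_I(j) = i_h if j = i_{h-1}+1, and j-1 otherwise *)
Definition sigmaI (I : seq nat) (j : nat) : nat :=
  let s := sort leq (undup I) in
  let t := 0%N :: s in
  let h := find (fun x => x.+1 == j) t in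
  if (h < size s)%N then nth 0%N s h else j.-1.

(* tilde I_j = I u [i_{h-1}] if j = i_h in I, and I u [j-1] otherwise *)
Definition tildeI (I : seq nat) (j : nat) : seq nat :=
  let s := sort leq (undup I) in
  if j \in I then I ++ irangeN (nth 0%N (0%N :: s) (index j s))
  else I ++ irangeN j.-1.

(* Let G_l be the first nonempty graph. As vec-Delta = 1, G_l is connected and every
   component of a later G_t touches G_1 u ... u G_{t-1}.  So the rightmost edge Y_t of
   G_1 u ... u G_t advances by runs: the component [P_t, Y_t] of G_t ending there starts
   at most one edge after Y_{t-1}.  These runs chain from an edge x of G_l to the edge
   k; alternate links of a greedy subchain give a family of pairwise separated runs
   of total length at least (k - x + 1)/2.  Listing their indices (plus m) as I, the
   shift permutation sigma_I puts each chosen G_t right after a prefix whose edges all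
   lie left of P_t - 1, so [P_t, Y_t] survives as a component of its H-term and
   vec-lambda >= (k - x + 1)/2.  The mirror image v |-> -v yields another I with
   vec-lambda >= x/2, hence one of them has vec-lambda >= (k + 1)/4.  The vec-Delta
   bound is immediate: every reordering of a nonempty family has vec-Delta >= 1. *)

From HB Require Import structures.
From mathcomp Require Import all_boot all_order all_algebra.
From mathcomp Require Import finmap.
From mathcomp Require Import zify lra.
Set Implicit Arguments. Unset Strict Implicit. Unset Printing Implicit Defensive.
Import Order.TTheory GRing.Theory Num.Theory.
Local Open Scope ring_scope.

(** * Sequences and finite sets of integers *)

Lemma has_split_last (T : Type) (q : pred T) (s : seq T) : has q s ->
  exists pre z post, [/\ s = pre ++ z :: post, q z & ~~ has q post].
Proof.
elim: s => [|y s IH] //= hys; have [hs|hs] := boolP (has q s).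
  by have [pre [z [post [-> hz hpost]]]] := IH hs; exists (y :: pre), z, post.
by exists [::], y, s; rewrite (negPf hs) orbF in hys.
Qed.

Lemma uniq_map_inj_in (T1 T2 : eqType) (f : T1 -> T2) (s : seq T1) :
  uniq (map f s) -> {in s &, injective f}.
Proof.
elim: s => //= a s IH /andP[ha hu] x y; rewrite !inE.
case/orP=> [/eqP->|hx]; case/orP=> [/eqP->|hy] // hf.
- by move: ha; rewrite hf map_f.
- by move: ha; rewrite -hf map_f.
- exact: IH.
Qed.

Lemma pairwise_ltn_in (r : rel nat) s : (forall a b, r a b -> a < b)%N -> pairwise r s ->
  {in s &, forall a b, (a < b)%N -> r a b}.
Proof.
move=> hr; elim: s => //= z s IH /andP[/allP hz hs] a b; rewrite !inE.
case/orP=> [/eqP->|ha]; case/orP=> [/eqP->|hb] hab; first by rewrite ltnn in hab.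
- exact: hz.
- by have := hr _ _ (hz _ ha); lia.
- exact: IH.
Qed.

Lemma sum_path_le (g f : nat -> nat) x s :
  path (fun a b => g b <= f a)%N x s -> (\sum_(b <- s) g b <= \sum_(a <- belast x s) f a)%N.
Proof.
elim: s x => [|y s IH] x /=; first by rewrite big_nil.
by case/andP=> hxy /IH hs; rewrite !big_cons leq_add.
Qed.

Lemma path_iota (r : rel nat) a n :
  (forall t, a <= t < a + n -> r t t.+1)%N -> path r a (iota a.+1 n).
Proof.
elim: n a => [|n IH] a hr //=; rewrite hr ?IH //; last lia.
by move=> t ht; apply: hr; lia.
Qed.

Lemma last_iota a n : last a (iota a.+1 n) = (a + n)%N.
Proof. by elim: n a => [|n IH] a /=; rewrite ?addn0 ?IH ?addSnnS. Qed.

Lemma bigmax_fset_mem (A : {fset int}) x : x \in A -> \big[Num.max/x]_(e <- A) e \in A.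
Proof.
move=> hx; rewrite big_seq; apply: (big_ind (fun y => y \in A)) => // a b ha hb.
by case: leP.
Qed.

Lemma le_bigmax_fset (A : {fset int}) x e : e \in A -> e <= \big[Num.max/x]_(e <- A) e.
Proof. by move=> he; apply: le_bigmax_seq. Qed.

(** * Components of subgraphs of Path_Z *)

Lemma mem_irange (a b x : int) : a <= b -> (x \in irange a b) = (a <= x <= b).
Proof.
move=> hab; apply/mapP/idP => [[n]|hx].
  by rewrite mem_iota => /andP[_ hn] ->; lia.
by exists (absz (x - a)); [rewrite mem_iota|]; lia.
Qed.

Lemma is_compP (G : pgraph) a b :
  reflect [/\ a <= b, forall x, a <= x <= b -> x \in G, a - 1 \notin G & b + 1 \notin G]
          (is_comp G a b).
Proof.
apply: (iffP and4P) => -[hab hG ha hb]; split=> //.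
  by move=> x hx; apply: (allP hG); rewrite mem_irange.
by apply/allP => x; rewrite mem_irange // => /hG.
Qed.

Lemma mem_comps (G : pgraph) p : (p \in comps G) = is_comp G p.1 p.2.
Proof.
rewrite mem_filter andb_idr // => /is_compP[hab hG _ _].
by apply/allpairsP; exists p; rewrite !hG ?lexx ?hab //; case: p {hab hG}.
Qed.

Lemma comps_in (G : pgraph) p e : p \in comps G -> p.1 <= e <= p.2 -> e \in G.
Proof. by rewrite mem_comps => /is_compP[_ hG _ _ /hG]. Qed.

Lemma comp_bounds (G : pgraph) p : p \in comps G -> p.1 <= p.2.
Proof. by rewrite mem_comps => /is_compP[]. Qed.

Lemma comps_uniq (G : pgraph) : uniq (comps G).
Proof. by rewrite filter_uniq // allpairs_uniq // => -[? ?] [? ?]. Qed.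

Lemma Delta_gt0 (G : pgraph) p : p \in comps G -> (0 < Delta G)%N.
Proof. by rewrite /Delta; case: (comps G). Qed.

Lemma comp_size_le_lambda (G : pgraph) p : p \in comps G -> (comp_size p <= lambda G)%N.
Proof. by move=> hp; apply: (leq_bigmax_seq p). Qed.

Lemma sharesP (F : pgraph) a b : a <= b ->
  reflect (exists2 e, e \in F & a - 1 <= e <= b + 1) (shares F a b).
Proof.
move=> hab; apply: (iffP seq.hasP) => [[v]|[e he hae]].
  by rewrite mem_irange; last lia; move=> hv /orP[] he; [exists v | exists (v + 1)] => //; lia.
have hv v : a - 1 <= v <= b -> v \in irange (a - 1) b by rewrite mem_irange; lia.
have [heb|heb] := lerP e b.
  by exists e; [apply: hv; lia | rewrite /pvert he].
by exists b; [apply: hv; lia | rewrite /pvert (_ : b + 1 = e) ?he ?orbT //; lia].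
Qed.

Lemma shares_fset0 a b : shares fset0 a b = false.
Proof. by apply/seq.hasPn => v _; rewrite /pvert !inE. Qed.

Lemma maximal_run (G : pgraph) (d : int) e : d = 1 \/ d = -1 -> e \in G ->
  exists n : nat, e + d * n.+1%:Z \notin G /\ forall i : nat, (i <= n)%N -> e + d * i%:Z \in G.
Proof.
move=> hd he; pose B := (\max_(y <- G) `|y|)%N.
have hB y : y \in G -> (`|y| <= B)%N by move=> hy; apply: leq_bigmax_seq.
have hex : exists n : nat, e + d * n.+1%:Z \notin G.
  by exists (2 * B)%N; apply/negP => /hB; have := hB e he; case: hd => ->; lia.
case: (ex_minnP hex) => n hn hmin; exists n; split=> // -[|i] hi.
  by rewrite mulr0 addr0.
by apply/negPn/negP => /hmin; lia.
Qed.

Lemma comp_exists (G : pgraph) e : e \in G -> exists2 p, p \in comps G & p.1 <= e <= p.2.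
Proof.
move=> he.
have [n [hn hGn]] := maximal_run (or_introl erefl) he.
have [n' [hn' hGn']] := maximal_run (or_intror erefl) he.
exists (e - n'%:Z, e + n%:Z); last by rewrite /=; lia.
rewrite mem_comps; apply/is_compP; split => /=.
- lia.
- move=> x hx; have [hxe|hxe] := lerP e x.
    by have := hGn (absz (x - e)) ltac:(lia); congr (_ \in G); lia.
  by have := hGn' (absz (e - x)) ltac:(lia); congr (_ \in G); lia.
- by move: hn'; congr (~~ (_ \in G)); lia.
- by move: hn; congr (~~ (_ \in G)); lia.
Qed.

Lemma mem_ominus (G F : pgraph) e :
  reflect (exists2 p, p \in comps G & (p.1 <= e <= p.2) && ~~ shares F p.1 p.2)
          (e \in ominus G F).
Proof.
rewrite /ominus inE /=; apply: (iffP andP) => [[_ /seq.hasP //]|[p hp hpe]].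
split; last by apply/seq.hasP; exists p.
by case/andP: hpe => /(comps_in hp).
Qed.

Lemma ominus_sub (G F : pgraph) e : e \in ominus G F -> e \in G.
Proof. by rewrite /ominus inE => /andP[]. Qed.

Lemma comp_ominus (G F : pgraph) p :
  p \in comps G -> ~~ shares F p.1 p.2 -> p \in comps (ominus G F).
Proof.
move=> hp hns; have := hp; rewrite !mem_comps => /is_compP[hab hG ha hb].
apply/is_compP; split => //; last 2 first.
- by apply: contra ha => /ominus_sub.
- by apply: contra hb => /ominus_sub.
by move=> x hx; apply/mem_ominus; exists p; rewrite ?hx.
Qed.

Lemma ominus0 (G : pgraph) : ominus G fset0 = G.
Proof.
apply/fsetP => e; apply/idP/idP => [/ominus_sub //|/comp_exists[p hp hpe]].
by apply/mem_ominus; exists p; rewrite ?hpe ?shares_fset0.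
Qed.

Lemma in_gunion (L : seq pgraph) e : (e \in gunion L) = has (fun G : pgraph => e \in G) L.
Proof.
elim: L => [|G L IH]; first by rewrite /gunion big_nil inE.
by rewrite /gunion big_cons inE -/(gunion L) IH.
Qed.

Lemma gunion_take_mono (L : seq pgraph) n n' e : (n <= n')%N ->
  e \in gunion (take n L) -> e \in gunion (take n' L).
Proof.
move=> hn; rewrite !in_gunion => /seq.hasP[G hG he]; apply/seq.hasP; exists G => //.
by move: hG; rewrite -(take_takel _ hn) => /mem_take.
Qed.

Lemma in_gunion_takeS (L : seq pgraph) n e :
  (e \in gunion (take n.+1 L)) = (e \in gunion (take n L)) || (e \in nth fset0 L n).
Proof.
have [hn|hn] := ltnP n (size L).
  by rewrite (take_nth fset0 hn) !in_gunion has_rcons orbC.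
by rewrite !take_oversize ?nth_default ?inE ?orbF //; apply: leqW.
Qed.

Lemma in_gunion_takeS_r (L : seq pgraph) n e :
  e \in nth fset0 L n -> e \in gunion (take n.+1 L).
Proof. by rewrite in_gunion_takeS => ->; rewrite orbT. Qed.

Lemma first_nonempty (L : seq pgraph) : gunion L != fset0 ->
  exists2 l, nth fset0 L l != fset0 & gunion (take l L) = fset0.
Proof.
elim: L => [|G L IH]; first by rewrite /gunion big_nil eqxx.
have [->|hG] := eqVneq G fset0; last by exists 0%N; rewrite ?take0 /gunion ?big_nil.
rewrite /gunion big_cons fset0U -/(gunion L) => /IH[l hl hU].
by exists l.+1 => //; rewrite /gunion /= big_cons fset0U.
Qed.

Lemma vecDeltaE (L : seq pgraph) : vecDelta L =
  (\sum_(i <- iota 0 (size L)) Delta (ominus (nth fset0 L i) (gunion (take i L))))%N.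
Proof. by rewrite /vecDelta /Hs big_map. Qed.

Lemma vecLambdaE (L : seq pgraph) : vecLambda L =
  (\sum_(i <- iota 0 (size L)) lambda (ominus (nth fset0 L i) (gunion (take i L))))%N.
Proof. by rewrite /vecLambda /Hs big_map. Qed.

Lemma nonempty_index (L : seq pgraph) l : nth fset0 L l != fset0 -> (l < size L)%N.
Proof. by apply: contraR; rewrite -leqNgt => /(nth_default fset0) ->. Qed.

Lemma vecDelta_gt0 (L : seq pgraph) : gunion L != fset0 -> (0 < vecDelta L)%N.
Proof.
case/first_nonempty => l hl hU; have [e he] := fset0Pn _ hl.
have [p hp _] := comp_exists he.
rewrite vecDeltaE (bigD1_seq l) ?mem_iota ?iota_uniq ?nonempty_index //= hU ominus0.
exact: leq_trans (Delta_gt0 hp) (leq_addr _ _).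
Qed.

Lemma vecDelta_eq1 (L : seq pgraph) l :
  vecDelta L = 1%N -> nth fset0 L l != fset0 -> gunion (take l L) = fset0 ->
  Delta (nth fset0 L l) = 1%N /\
  forall i p, (l < i)%N -> p \in comps (nth fset0 L i) -> shares (gunion (take i L)) p.1 p.2.
Proof.
move=> hD hl hU; have [e he] := fset0Pn _ hl; have [p hp _] := comp_exists he.
move: hD; rewrite vecDeltaE (bigD1_seq l) ?mem_iota ?iota_uniq ?nonempty_index //=.
rewrite hU ominus0 => /eqP; rewrite -(prednK (Delta_gt0 hp)) addSn eqSS addn_eq0.
case/andP=> /eqP -> hrest; split=> // i q hli hq.
apply/negPn/negP => /(comp_ominus hq)/Delta_gt0.
move: hrest; rewrite sum_nat_seq_eq0 => /allP/(_ i); rewrite mem_iota add0n.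
have hi : (i < size L)%N.
  by apply/nonempty_index/fset0Pn; exists q.1; apply: (comps_in hq); rewrite lexx (comp_bounds hq).
by rewrite hi neq_ltn hli orbT => /(_ isT) /eqP ->.
Qed.

(** * Mirror symmetry *)

(* The reflection v |-> -v of Path_Z maps the edge labelled i to the edge labelled 1 - i. *)
Definition mirror (G : pgraph) : pgraph := [fset 1 - e | e in G]%fset.

Definition mirror_pair (p : int * int) : int * int := (1 - p.2, 1 - p.1).

Lemma mem_mirror (G : pgraph) e : (e \in mirror G) = (1 - e \in G).
Proof.
apply/imfsetP/idP => [[y hy ->]|he]; first by rewrite subKr.
by exists (1 - e); rewrite ?subKr.
Qed.

Lemma mirrorK : involutive mirror.
Proof. by move=> G; apply/fsetP => e; rewrite !mem_mirror subKr. Qed.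

Lemma mirror0 : mirror fset0 = fset0.
Proof. exact: imfset0. Qed.

Lemma mirror_pairK : involutive mirror_pair.
Proof. by case=> a b; rewrite /mirror_pair /= !subKr. Qed.

Lemma is_comp_mirror (G : pgraph) a b : is_comp (mirror G) a b = is_comp G (1 - b) (1 - a).
Proof.
apply/is_compP/is_compP => -[hab hG ha hb]; split.
- lia.
- by move=> x hx; rewrite -[x](subKr 1) -mem_mirror; apply: hG; lia.
- by move: hb; rewrite mem_mirror; congr (~~ (_ \in G)); lia.
- by move: ha; rewrite mem_mirror; congr (~~ (_ \in G)); lia.
- lia.
- by move=> x hx; rewrite mem_mirror; apply: hG; lia.
- by rewrite mem_mirror; move: hb; congr (~~ (_ \in G)); lia.
- by rewrite mem_mirror; move: ha; congr (~~ (_ \in G)); lia.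
Qed.

Lemma shares_mirror (F : pgraph) a b : a <= b ->
  shares (mirror F) a b = shares F (1 - b) (1 - a).
Proof.
move=> hab; have hab' : 1 - b <= 1 - a by lia.
apply/(sharesP _ hab)/(sharesP _ hab') => -[e he hae]; exists (1 - e).
- by rewrite -mem_mirror.
- lia.
- by rewrite mem_mirror subKr.
- lia.
Qed.

Lemma comps_mirror (G : pgraph) : perm_eq (comps (mirror G)) (map mirror_pair (comps G)).
Proof.
apply: uniq_perm; rewrite ?comps_uniq ?(map_inj_uniq (inv_inj mirror_pairK)) ?comps_uniq //.
move=> p; rewrite -{2}[p]mirror_pairK mem_map; last exact: inv_inj mirror_pairK.
by rewrite !mem_comps is_comp_mirror.
Qed.

Lemma Delta_mirror (G : pgraph) : Delta (mirror G) = Delta G.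
Proof. by rewrite /Delta (perm_size (comps_mirror G)) size_map. Qed.

Lemma lambda_mirror (G : pgraph) : lambda (mirror G) = lambda G.
Proof.
rewrite /lambda (perm_big _ (comps_mirror G)) big_map; apply: eq_bigr => -[a b] _.
by rewrite /comp_size /=; congr (absz _).+1; lia.
Qed.

Lemma mirror_ominus_sub (G F : pgraph) e :
  e \in ominus G F -> 1 - e \in ominus (mirror G) (mirror F).
Proof.
case/mem_ominus => -[a b] hp /andP[/= hpe hns]; apply/mem_ominus; exists (1 - b, 1 - a).
  by move: hp; rewrite !mem_comps is_comp_mirror /= !subKr.
have /= hab := comp_bounds hp.
by rewrite shares_mirror /= ?subKr ?hns ?andbT; lia.
Qed.

Lemma mirror_ominus (G F : pgraph) : mirror (ominus G F) = ominus (mirror G) (mirror F).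
Proof.
apply/fsetP => e; rewrite mem_mirror; apply/idP/idP => [/mirror_ominus_sub|].
  by rewrite subKr.
by move/mirror_ominus_sub; rewrite !mirrorK.
Qed.

Lemma gunion_mirror (L : seq pgraph) : gunion (map mirror L) = mirror (gunion L).
Proof.
apply/fsetP => e; rewrite mem_mirror !in_gunion has_map.
by apply: eq_has => G /=; rewrite mem_mirror.
Qed.

Lemma Hs_mirror (L : seq pgraph) : Hs (map mirror L) = map mirror (Hs L).
Proof.
rewrite /Hs size_map -map_comp; apply/eq_in_map => i; rewrite mem_iota => hi /=.
by rewrite (nth_map fset0) -?map_take ?gunion_mirror ?mirror_ominus //; lia.
Qed.

Lemma vecDelta_mirror (L : seq pgraph) : vecDelta (map mirror L) = vecDelta L.
Proof. by rewrite /vecDelta Hs_mirror big_map; apply: eq_bigr => H _; apply: Delta_mirror. Qed.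

Lemma vecLambda_mirror (L : seq pgraph) : vecLambda (map mirror L) = vecLambda L.
Proof. by rewrite /vecLambda Hs_mirror big_map; apply: eq_bigr => H _; apply: lambda_mirror. Qed.

Lemma reorder_mirror (L : seq pgraph) sigma :
  reorder (map mirror L) sigma = map mirror (reorder L sigma).
Proof.
rewrite /reorder size_map -map_comp; apply: eq_map => j /=.
have [hj|hj] := ltnP (sigma j).-1 (size L); first by rewrite (nth_map fset0).
by rewrite !nth_default ?size_map //; apply/fsetP => e; rewrite mem_mirror !inE.
Qed.

(** * Chains of runs *)

Section LinkedRuns.
Variables P Y : nat -> int.

(* Run t consists of the edges P t, ..., Y t; it is empty when P t = Y t + 1. *)

Definition linked (a b : nat) : bool := (a < b)%N && (P b <= Y a + 1).
Definition separated (a b : nat) : bool := (a < b)%N && (Y a + 2 <= P b).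
Definition total_length (C : seq nat) : int := \sum_(c <- C) (Y c - P c + 1).

Lemma total_length_cons c C : total_length (c :: C) = Y c - P c + 1 + total_length C.
Proof. by rewrite /total_length big_cons. Qed.

Lemma total_length_le C : total_length C <= (\sum_(c <- C) absz (Y c - P c + 1)%R)%:Z.
Proof.
elim: C => [|c C IH]; first by rewrite /total_length !big_nil.
by rewrite total_length_cons big_cons PoszD lerD // abszE ler_norm.
Qed.

(* Greedy: jump from x to the last run of s linked to x and recurse, alternating the
   runs jumped from between the two families. *)
Lemma linked_split x s : path linked x s ->
  exists A B, [/\ pairwise separated (x :: A), pairwise separated B,
    {subset A <= s}, {subset B <= s} &
    Y (last x s) - P x + 1 <= total_length (x :: A) + total_length B].
Proof.
have [n] := ubnP (size s); elim: n x s => // n IH x [|y s] hn hp.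
  by exists [::], [::]; rewrite /= /total_length !big_cons !big_nil; split => //; lia.
pose q b := P b <= Y x + 1.
have hq : has q (y :: s) by move: hp => /= /andP[/andP[_ hy] _]; rewrite /= /q hy.
have [pre [z [post [hs hz hpost]]]] := has_split_last hq.
have hpz : path linked z post by move: hp; rewrite hs cat_path => /andP[_ /andP[]].
have hxs : all (fun b => x < b)%N (y :: s).
  by apply: (order_path_min ltn_trans); apply: sub_path hp => a b /andP[].
have hpost_s b : b \in post -> b \in y :: s by rewrite hs mem_cat inE => ->; rewrite !orbT.
have [|A [B [hA hB hAs hBs hlen]]] := IH z post _ hpz.
  by move: hn; rewrite hs size_cat /=; lia.
exists B, (z :: A); split => //.
- rewrite pairwise_cons hB andbT; apply/allP => b hb.
  have hbp := hBs _ hb; rewrite /separated (allP hxs _ (hpost_s _ hbp)) /=.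
  by move/seq.hasPn: hpost => /(_ b hbp); rewrite /q; lia.
- by move=> b /hBs /hpost_s.
- move=> b; rewrite inE => /orP[/eqP ->|/hAs/hpost_s //].
  by rewrite hs mem_cat inE eqxx orbT.
- move: hlen hz; rewrite hs last_cat /= !total_length_cons /q; lia.
Qed.

Lemma linked_half_cover x s : path linked x s ->
  exists C, [/\ pairwise separated C, {subset C <= x :: s} &
    Y (last x s) - P x + 1 <= 2 * total_length C].
Proof.
case/linked_split => A [B [hA hB hAs hBs hlen]].
have [hBA|hAB] := lerP (total_length B) (total_length (x :: A)).
  exists (x :: A); split=> //; last lia.
  by move=> c; rewrite !inE => /orP[->|/hAs ->]; rewrite ?orbT.
by exists B; split=> //; [move=> c /hBs hc; rewrite inE hc orbT | lia].
Qed.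

End LinkedRuns.

(** * The shift permutations sigma_I *)

Definition sorted_undup (I : seq nat) : seq nat := sort leq (undup I).

Lemma sorted_undup_ltn I : sorted ltn (sorted_undup I).
Proof. by rewrite ltn_sorted_uniq_leq sort_uniq undup_uniq (sort_sorted leq_total). Qed.

Lemma mem_sorted_undup I x : (x \in sorted_undup I) = (x \in I).
Proof. by rewrite mem_sort mem_undup. Qed.

Lemma sigmaIS I j : sigmaI I j.+1 =
  if (index j (0%N :: sorted_undup I) < size (sorted_undup I))%N
  then nth 0%N (sorted_undup I) (index j (0%N :: sorted_undup I)) else j.
Proof. by []. Qed.

Section SigmaI.
Variables (m : nat) (I : seq nat).
Hypothesis hI : valid_I m I.
Local Notation s := (sorted_undup I).
Local Notation t := (0%N :: sorted_undup I).

Lemma sorted_undup_bounds x : x \in s -> (0 < x <= m)%N.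
Proof. by rewrite mem_sorted_undup; case: hI => hsub _ /hsub; rewrite mem_iota; lia. Qed.

Lemma mem_sorted_undup_max : m \in s.
Proof. by rewrite mem_sorted_undup; case: hI. Qed.

Lemma sorted0_undup_le n : n \in t -> (n <= m)%N.
Proof. by rewrite inE => /orP[/eqP -> //|/sorted_undup_bounds/andP[]]. Qed.

Lemma nth0_sorted_undup_le i : (nth 0%N t i <= m)%N.
Proof.
have [hi|hi] := ltnP i (size t); first exact/sorted0_undup_le/mem_nth.
by rewrite nth_default.
Qed.

Lemma sorted0_undup : sorted ltn t.
Proof.
move: (sorted_undup_ltn I) sorted_undup_bounds.
by case: (sorted_undup I) => //= x s' -> /(_ x); rewrite inE eqxx andbT => /(_ isT)/andP[].
Qed.

Let t_uniq : uniq t.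
Proof. by move: sorted0_undup; rewrite ltn_sorted_uniq_leq => /andP[]. Qed.

Let t_leq : {in gtn (size t) &, {homo nth 0%N t : i j / (i <= j)%N}}.
Proof. by apply: sorted_leq_nth leq_trans leqnn _ _ (sub_sorted ltnW sorted0_undup). Qed.

Let t_ltn : {in gtn (size t) &, {homo nth 0%N t : i j / (i < j)%N}}.
Proof. exact: sorted_ltn_nth ltn_trans _ _ sorted0_undup. Qed.

Lemma sorted_undup_nth_gt h : (h < size s)%N -> (nth 0%N t h < nth 0%N s h)%N.
Proof.
move=> hh; have hh0 : (h < size t)%N by rewrite /= ltnS ltnW.
have hh1 : (h.+1 < size t)%N by rewrite /= ltnS.
exact: t_ltn hh0 hh1 (ltnSn h).
Qed.

Lemma sigmaI_nth h : (h < size s)%N -> sigmaI I (nth 0%N t h).+1 = nth 0%N s h.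
Proof. by move=> hh; rewrite sigmaIS index_uniq ?t_uniq // ?hh //= ltnS ltnW. Qed.

Lemma sigmaI_bounds j : (0 < j <= m)%N ->
  [/\ (0 < sigmaI I j)%N, (j.-1 <= sigmaI I j)%N &
      forall n, n \in t -> (j <= n)%N -> (sigmaI I j <= n)%N].
Proof.
case: j => [//|j] hj; rewrite sigmaIS; set h := index j t.
case: ifP => hh; last first.
  have hj0 : j != 0%N.
    by apply: contraFN hh; rewrite /h => /eqP -> /=; move: mem_sorted_undup_max; case: (s).
  by split=> [|//|n _]; lia.
have hh0 : (h < size t)%N by rewrite /= ltnS ltnW.
have hh1 : (h.+1 < size t)%N by rewrite /= ltnS.
have hjt : nth 0%N t h = j by apply: nth_index; rewrite -index_mem.
have hlt : (j < nth 0%N s h)%N by rewrite -hjt sorted_undup_nth_gt.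
have hs : nth 0%N s h \in s by rewrite mem_nth.
split; [by have /andP[] := sorted_undup_bounds hs | by apply: ltnW|].
move=> n hn hjn; have hi : (index n t < size t)%N by rewrite index_mem.
have hhi : (h < index n t)%N.
  rewrite ltnNge; apply/negP => /(t_leq hi hh0); rewrite nth_index // hjt; lia.
by rewrite -[n in (_ <= n)%N](nth_index 0%N hn); exact: t_leq hh1 hi hhi.
Qed.

Lemma sigmaI_onto n u : n \in t -> (0 < u <= n)%N ->
  exists2 j, (0 < j <= n)%N & sigmaI I j = u.
Proof.
move=> hn hu; have hnt : (index n t < size t)%N by rewrite index_mem.
have hnm : nth 0%N t (index n t) = n by rewrite nth_index.
have [hus|hus] := boolP (u \in s).
  have hg : (index u s < size s)%N by rewrite index_mem.
  exists (nth 0%N t (index u s)).+1; last by rewrite sigmaI_nth // nth_index.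
  by have := sorted_undup_nth_gt hg; rewrite nth_index //; lia.
have hut : u \notin t by rewrite inE negb_or hus andbT; lia.
exists u.+1; last by rewrite sigmaIS memNindex // ltnNge leqnSn.
have hun : u != n by apply: contraNneq hut => ->.
by rewrite /= ltn_neqAle hun; lia.
Qed.

End SigmaI.

Lemma sigmaI_shift_perm m I : valid_I m I -> is_shift_perm m (sigmaI I).
Proof.
move=> hI; have hm : m \in 0%N :: sorted_undup I by rewrite inE mem_sorted_undup_max ?orbT.
have hb j : j \in irangeN m -> [/\ (0 < sigmaI I j)%N, (j.-1 <= sigmaI I j)%N
    & (sigmaI I j <= m)%N].
  rewrite mem_iota => hj; have [h1 h2 h3] := sigmaI_bounds hI (j := j) ltac:(lia).
  by split=> //; apply: h3 hm _; lia.
split.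
- by move=> j /hb[h1 _ h3]; rewrite mem_iota; lia.
- apply: uniq_map_inj_in; apply: (leq_size_uniq (iota_uniq 1 m)); last by rewrite size_map.
  move=> u; rewrite mem_iota => hu; have [j hj <-] := sigmaI_onto hI hm (u := u) ltac:(lia).
  by apply: map_f; rewrite mem_iota; lia.
- by move=> j /hb[].
Qed.

Lemma valid_tildeI m I j : valid_I m I -> j \in irangeN m -> valid_I m (tildeI I j).
Proof.
move=> hI; have [hsub hm] := hI; rewrite mem_iota => hj.
have hle := nth0_sorted_undup_le hI (index j (sorted_undup I)).
rewrite /tildeI -/(sorted_undup I); split; last by case: ifP; rewrite mem_cat hm.
by case: ifP => _ x; rewrite mem_cat => /orP[/hsub //|]; rewrite !mem_iota; lia.
Qed.

Lemma size_reorder (L : seq pgraph) sigma : size (reorder L sigma) = size L.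
Proof. by rewrite size_map size_iota. Qed.

Section ReorderSigmaI.
Variables (Gs : seq pgraph) (I : seq nat).
Hypothesis hI : valid_I (size Gs) I.
Local Notation s := (sorted_undup I).
Local Notation t := (0%N :: sorted_undup I).
Local Notation r := (reorder Gs (sigmaI I)).

Lemma gunion_take_reorder_sigmaI n : n \in t -> gunion (take n r) = gunion (take n Gs).
Proof.
move=> hn; have hnm := sorted0_undup_le hI hn.
apply/fsetP => e; rewrite !in_gunion -map_take take_iota (minn_idPl hnm) has_map.
apply/seq.hasP/seq.hasP => [[j]|[G hG he]].
  rewrite mem_iota => hj he; have [h1 _ h3] := sigmaI_bounds hI (j := j) ltac:(lia).
  have hlt : ((sigmaI I j).-1 < n)%N by have := h3 n hn ltac:(lia); lia.
  by exists (nth fset0 Gs (sigmaI I j).-1) => //; rewrite -(nth_take _ hlt) mem_nth ?size_takel.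
have hi : (index G (take n Gs) < n)%N by rewrite -[n in (_ < n)%N](size_takel hnm) index_mem.
have [j hj hsj] := sigmaI_onto hI hn (u := (index G (take n Gs)).+1) ltac:(lia).
exists j; first by rewrite mem_iota; lia.
by rewrite /= hsj /= -(nth_take _ hi) nth_index.
Qed.

Lemma gunion_reorder_sigmaI : gunion r = gunion Gs.
Proof.
have hm : size Gs \in t by rewrite inE mem_sorted_undup_max ?orbT.
by rewrite -[r]take_size size_reorder gunion_take_reorder_sigmaI // take_size.
Qed.

Lemma nth_reorder_sigmaI h : (h < size s)%N ->
  nth fset0 r (nth 0%N t h) = nth fset0 Gs (nth 0%N s h).-1.
Proof.
move=> hh; have hs : nth 0%N s h \in s by rewrite mem_nth.
have := sorted_undup_nth_gt hI hh; have /andP[_ hsm] := sorted_undup_bounds hI hs => hlt.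
by rewrite (nth_map 0%N) ?size_iota ?nth_iota ?add1n ?(sigmaI_nth hI) //; lia.
Qed.

(* With I = {i_1 < ... < i_p}, sigma_I puts G_{i_h} at position i_{h-1} + 1, right after
   G_1, ..., G_{i_{h-1}} in some order. *)
Lemma vecLambda_reorder_sigmaI_ge (g : nat -> nat) :
  path (fun a b => g b <= lambda (ominus (nth fset0 Gs b.-1) (gunion (take a Gs))))%N 0%N s ->
  (\sum_(b <- s) g b <= vecLambda r)%N.
Proof.
move=> hp; rewrite vecLambdaE size_reorder.
pose Lam a := lambda (ominus (nth fset0 r a) (gunion (take a r))).
apply: (@leq_trans (\sum_(a <- belast 0%N s) Lam a)).
  apply: sum_path_le; apply/(pathP 0%N) => h hh; move/(pathP 0%N): hp => /(_ h hh).
  by rewrite /Lam nth_reorder_sigmaI // gunion_take_reorder_sigmaI // mem_nth //= ltnS ltnW.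
have := sorted0_undup hI; rewrite lastI => hsort.
apply: (uniq_sub_le_big (op := addn) (le := leq) leqnn (fun x y => leq_addr y x)).
- by move: hsort; rewrite ltn_sorted_uniq_leq rcons_uniq => /andP[/andP[]].
- exact: iota_uniq.
move=> a ha; rewrite mem_iota add0n /=.
have hlast : (last 0%N s <= size Gs)%N := sorted0_undup_le hI (mem_last 0%N s).
move: hsort; rewrite (sorted_pairwise ltn_trans) pairwise_rcons => /andP[/allP/(_ a ha)].
by move=> /= ha'; lia.
Qed.

End ReorderSigmaI.

Lemma vecLambda_separated_ge (Gs : seq pgraph) (P Y : nat -> int) (C : seq nat) :
  (0 < size Gs)%N -> pairwise (separated P Y) C -> {in C, forall c, c < size Gs}%N ->
  {in C, forall c e, e \in gunion (take c.+1 Gs) -> e <= Y c} ->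
  {in C, forall c (F : pgraph), (forall e, e \in F -> e + 2 <= P c) ->
     (absz (Y c - P c + 1)%R <= lambda (ominus (nth fset0 Gs c) F))%N} ->
  exists2 I, valid_I (size Gs) I &
    (\sum_(c <- C) absz (Y c - P c + 1)%R <= vecLambda (reorder Gs (sigmaI I)))%N.
Proof.
move=> hm hC hCm hY hgain; pose I := rcons (map succn C) (size Gs).
have hv : valid_I (size Gs) I.
  split; last by rewrite mem_rcons mem_head.
  by move=> b; rewrite mem_rcons inE => /orP[/eqP ->|/mapP[c /hCm hc ->]]; rewrite mem_iota; lia.
exists I => //.
pose len c := absz (Y c - P c + 1).
pose g b := if b \in map succn C then len b.-1 else 0%N.
have hsep : {in C &, forall a b, (a < b)%N -> separated P Y a b}.
  by apply: pairwise_ltn_in hC => a b /andP[].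
have hpath : path (fun a b => g b <=
    lambda (ominus (nth fset0 Gs b.-1) (gunion (take a Gs))))%N 0%N (sorted_undup I).
  apply: (sub_in_path _ (allss _) (sorted0_undup hv)).
  move=> a b ha hb; rewrite /g; case: ifP => // /mapP[c hc ->] hab /=.
  apply: (hgain _ hc) => e; move: ha; rewrite inE mem_sorted_undup mem_rcons inE.
  case/or3P=> [/eqP ->|/eqP ham|/mapP[c' hc' ha]].
  - by rewrite take0 in_gunion.
  - by have := hCm c hc; lia.
  have hc'c : (c' < c)%N by move: hab; rewrite ha.
  rewrite ha => /(hY _ hc'); have /andP[_ ?] := hsep _ _ hc' hc hc'c; lia.
apply: leq_trans (vecLambda_reorder_sigmaI_ge hv hpath).
have -> : (\sum_(c <- C) len c = \sum_(b <- map succn C) g b)%N.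
  by rewrite big_map; apply: eq_big_seq => c hc; rewrite /g map_f.
apply: (uniq_sub_le_big (op := addn) (le := leq) leqnn (fun x y => leq_addr y x)).
- by rewrite (map_inj_uniq succn_inj); apply: (pairwise_uniq _ hC) => a; rewrite /separated ltnn.
- exact: sorted_uniq ltn_trans ltnn _ (sorted_undup_ltn I).
- by move=> b hb; rewrite mem_sorted_undup mem_rcons inE hb orbT.
Qed.

(** * Sweeping from the first nonempty graph *)

Definition spans (y : int) (p : int * int) : bool := p.1 <= y <= p.2.

(* The left end of the component of G containing the edge y, or y + 1 (an empty run)
   when y is not an edge of G. *)
Definition comp_start (G : pgraph) (y : int) : int :=
  (nth (y + 1, y) (comps G) (find (spans y) (comps G))).1.

Lemma comp_startP (G : pgraph) y : y \in G ->
  exists2 b, (comp_start G y, b) \in comps G & comp_start G y <= y <= b.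
Proof.
case/comp_exists => p hp hpy.
have hhas : has (spans y) (comps G) by apply/seq.hasP; exists p.
have hf : (find (spans y) (comps G) < size (comps G))%N by rewrite -has_find.
have := nth_find (y + 1, y) hhas; have := mem_nth (y + 1, y) hf.
by rewrite /comp_start; case: nth => a b hab habP; exists b.
Qed.

Lemma comp_start_notin (G : pgraph) y : y \notin G -> comp_start G y = y + 1.
Proof.
move=> hy; rewrite /comp_start nth_default // leqNgt -has_find.
by apply/seq.hasPn => p hp; apply: contra hy => /(comps_in hp).
Qed.

Lemma comp_start_max (G : pgraph) y : (forall e, e \in G -> e <= y) -> y \in G ->
  (comp_start G y, y) \in comps G.
Proof.
move=> hmax hy; have [b hp hb] := comp_startP hy.
suff eb : b = y by move: hp; rewrite eb.
have /= hbG : b \in G by apply: (comps_in hp); rewrite /= lexx (comp_bounds hp).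
by have := hmax b hbG; lia.
Qed.

Lemma comp_start_lambda (G F : pgraph) y : (forall e, e \in G -> e <= y) ->
  (forall e, e \in F -> e + 2 <= comp_start G y) ->
  (absz (y - comp_start G y + 1)%R <= lambda (ominus G F))%N.
Proof.
move=> hmax hF; have [hy|hy] := boolP (y \in G); last first.
  by rewrite comp_start_notin // (_ : y - (y + 1) + 1 = 0) //; lia.
have hp := comp_start_max hmax hy; have /= hab := comp_bounds hp.
have hns : ~~ shares F (comp_start G y) y.
  by apply/(sharesP _ hab) => -[e /hF he]; lia.
by have := comp_size_le_lambda (comp_ominus hp hns); rewrite /comp_size /=; lia.
Qed.

Lemma comp_start_touching (G U : pgraph) y z : (y \in G) || (y \in U) ->
  (forall p, p \in comps G -> shares U p.1 p.2) -> (forall e, e \in U -> e <= z) ->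
  comp_start G y <= z + 1.
Proof.
move=> hy hsh hz; have [hyG|hyG] := boolP (y \in G); last first.
  by rewrite (negPf hyG) /= in hy; rewrite comp_start_notin //; have := hz y hy; lia.
have [b hp hb] := comp_startP hyG; have /= hab := comp_bounds hp.
by have /(sharesP _ hab)[e /hz] := hsh _ hp; lia.
Qed.

Lemma comp_start_connected (G : pgraph) x y : Delta G = 1%N -> x \in G -> y \in G ->
  comp_start G y <= x.
Proof.
move=> hD hx hy; have [p hc] : exists p, comps G = [:: p].
  by move: hD; rewrite /Delta; case: (comps G) => [|p [|]] //; exists p.
have [q] := comp_exists hx; rewrite hc inE => /eqP -> hpx.
have [b] := comp_startP hy; rewrite hc inE => /eqP hp _.
by move: hpx; rewrite -hp /=; lia.
Qed.

Section Sweep.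
Variables (Gs : seq pgraph) (l : nat) (x : int).
Hypotheses (hD : vecDelta Gs = 1%N) (hU0 : gunion (take l Gs) = fset0)
  (hx : x \in nth fset0 Gs l).
Local Notation m := (size Gs).
Local Notation U n := (gunion (take n Gs)).

(* x is an edge of every prefix union from G_l on, so it is a harmless default. *)
Definition reach (t : nat) : int := \big[Num.max/x]_(e <- U t.+1) e.

Definition reach_start (t : nat) : int := comp_start (nth fset0 Gs t) (reach t).

Let hGl : nth fset0 Gs l != fset0.
Proof. by apply/fset0Pn; exists x. Qed.

Lemma reach_mem t : (l <= t)%N -> reach t \in U t.+1.
Proof.
move=> hlt; apply/bigmax_fset_mem/(gunion_take_mono (n := l.+1)) => //.
by rewrite in_gunion_takeS hx orbT.
Qed.

Lemma reach_max t e : e \in U t.+1 -> e <= reach t.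
Proof. exact: le_bigmax_fset. Qed.

Lemma reach_linked : path (linked reach_start reach) l (iota l.+1 (m - l.+1)).
Proof.
have [_ htouch] := vecDelta_eq1 hD hGl hU0.
apply: path_iota => t ht; rewrite /linked ltnSn /=.
apply: (comp_start_touching (U := U t.+1)) (@reach_max t).
- by rewrite orbC -in_gunion_takeS; apply: reach_mem; lia.
- by move=> p; apply: htouch; lia.
Qed.

Lemma reach_start_seed : reach_start l <= x.
Proof.
have [hconn _] := vecDelta_eq1 hD hGl hU0.
apply: comp_start_connected hconn hx _.
by have := reach_mem (leqnn l); rewrite in_gunion_takeS hU0 inE.
Qed.

Lemma vecLambda_sweep hi : hi \in gunion Gs -> (forall e, e \in gunion Gs -> e <= hi) ->
  exists2 I, valid_I m I & hi - x + 1 <= 2 * (vecLambda (reorder Gs (sigmaI I)))%:Z.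
Proof.
move=> hhi hmax; have hlm : (l < m)%N := nonempty_index hGl.
have [C [hC hCs hlen]] := linked_half_cover reach_linked.
have hCm c : c \in C -> (l <= c < m)%N.
  by move/hCs; rewrite inE mem_iota => /orP[/eqP ->|]; lia.
have [I hI hIlen] : exists2 I, valid_I m I & (\sum_(c <- C)
    absz (reach c - reach_start c + 1)%R <= vecLambda (reorder Gs (sigmaI I)))%N.
  apply: vecLambda_separated_ge hC _ _ _; first lia.
  - by move=> c /hCm; lia.
  - by move=> c _ e /reach_max.
  - by move=> c _ F; apply: comp_start_lambda => e /in_gunion_takeS_r/reach_max.
exists I => //.
have hUm : U m.-1.+1 = gunion Gs by rewrite prednK ?take_size //; lia.
have hYhi : reach m.-1 = hi.
  apply/le_anti/andP; split; last by apply: reach_max; rewrite hUm.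
  by apply: hmax; rewrite -hUm; apply: reach_mem; lia.
have := total_length_le reach_start reach C; have := reach_start_seed.
move: hlen; rewrite last_iota (_ : (l + (m - l.+1))%N = m.-1) ?hYhi; lia.
Qed.

End Sweep.

Lemma mem_PathG (k : nat) e : (e \in PathG k) = (1 <= e <= k%:Z).
Proof.
apply/imfsetP/idP => [[i]|he]; first by rewrite /= mem_iota => hi ->; lia.
by exists (absz e); rewrite ?mem_iota /=; lia.
Qed.

Lemma PathG_neq0 (k : nat) : (0 < k)%N -> PathG k != fset0.
Proof. by move=> hk; apply/fset0Pn; exists 1; rewrite mem_PathG; lia. Qed.

Lemma sigmaI_vecLambda_bound (k : nat) (Gs : seq pgraph) :
  (0 < k)%N -> gunion Gs = PathG k -> vecDelta Gs = 1%N ->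
  exists2 I, valid_I (size Gs) I & (k < 4 * vecLambda (reorder Gs (sigmaI I)))%N.
Proof.
move=> hk hU hD; have [l hl hU0] : exists2 l, nth fset0 Gs l != fset0 & gunion (take l Gs) = fset0.
  by apply: first_nonempty; rewrite hU PathG_neq0.
have [x hx] := fset0Pn _ hl.
have hkG : k%:Z \in gunion Gs by rewrite hU mem_PathG; lia.
have hGk e : e \in gunion Gs -> e <= k%:Z by rewrite hU mem_PathG => /andP[].
have [IR hvR hR] := vecLambda_sweep hD hU0 hx hkG hGk.
pose Ms := map mirror Gs.
have hMD : vecDelta Ms = 1%N by rewrite vecDelta_mirror.
have hMU0 : gunion (take l Ms) = fset0 by rewrite -map_take gunion_mirror hU0 mirror0.
have hMx : 1 - x \in nth fset0 Ms l by rewrite (nth_map fset0) ?mem_mirror ?subKr ?nonempty_index.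
have hM0 : 0 \in gunion Ms by rewrite gunion_mirror hU mem_mirror mem_PathG; lia.
have hM e : e \in gunion Ms -> e <= 0 by rewrite gunion_mirror hU mem_mirror mem_PathG; lia.
have [IL hvL hL] := vecLambda_sweep hMD hMU0 hMx hM0 hM.
rewrite size_map reorder_mirror vecLambda_mirror in hvL hL.
have [hLR|hRL] := leqP (vecLambda (reorder Gs (sigmaI IL))) (vecLambda (reorder Gs (sigmaI IR))).
  by exists IR => //; lia.
by exists IL => //; lia.
Qed.

Theorem lemma5p6 (k : nat) (Gs : seq pgraph) :
  (0 < k)%N ->
  gunion Gs = PathG k ->
  vecDelta Gs = 1%N ->
  exists sigma : nat -> nat,
    is_shift_perm (size Gs) sigma /\
    exists I : seq nat,
      [/\ valid_I (size Gs) I,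
          {in irangeN (size Gs), sigma =1 sigmaI I},
          ((vecLambda (reorder Gs sigma))%:R : rat)
             >= k%:R / 8%:R - (\max_(G <- Gs) lambda G)%:R / 2%:R
        & forall j, j \in irangeN (size Gs) ->
            ((vecDelta (reorder Gs (sigmaI (tildeI I j))))%:R : rat)
              >= (vecDelta Gs)%:R / 2%:R].
Proof.
move=> hk hU hD; have [I hI hIk] := sigmaI_vecLambda_bound hk hU hD.
exists (sigmaI I); split; first exact: sigmaI_shift_perm.
exists I; split=> // [|j hj].
  have : (k%:R : rat) <= 4 * (vecLambda (reorder Gs (sigmaI I)))%:R.
    by rewrite -natrM ler_nat ltnW.
  have := ler0n rat (vecLambda (reorder Gs (sigmaI I))).
  by have := ler0n rat (\max_(G <- Gs) lambda G) => h0 h1 h2; lra.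
have : (1 : rat) <= (vecDelta (reorder Gs (sigmaI (tildeI I j))))%:R.
  by rewrite ler1n; apply: vecDelta_gt0; rewrite (gunion_reorder_sigmaI (valid_tildeI hI hj)) hU PathG_neq0.
by rewrite hD => h1; lra.
Qed.
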